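(* Let $\mathcal E$ be a nest on a complex Banach space $X$, let $\mathcal J$ be a $\mathcal T(\mathcal E)$-bimodule and let $\mathcal J_0$ be the set of finite rank operators in $\mathcal J$. Then $\mathcal J\subseteq\overline{\mathcal J_0}^{\mathrm{SOT}}\subseteq\overline{\mathcal J_0}^{\mathrm{WOT}}$, where the closures are in the strong and weak operator topologies respectively.
   Context: A nest $\mathcal E$ on $X$ is a family of closed linear subspaces of $X$, totally ordered by inclusion, containing $\{0\}$ and $X$, closed under arbitrary meets (intersections) and joins (norm-closed linear spans of unions). $\mathcal T(\mathcal E)=\{T\in\mathcal B(X): TE\subseteq E\ \forall E\in\mathcal E\}$. A $\mathcal T(\mathcal E)$-bimodule is a linear subspace $\mathcal J\subseteq\mathcal B(X)$ with $\mathcal T(\mathcal E)\mathcal J\subseteq\mathcal J$ and $\mathcal J\mathcal T(\mathcal E)\subseteq\mathcal J$. *)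

From HB Require Import structures.
From mathcomp Require Import all_boot all_order all_algebra.
From mathcomp Require Import complex.
From mathcomp Require Import all_classical all_reals all_analysis.
Import numFieldNormedType.Exports.
Import Order.TTheory GRing.Theory Num.Theory.

Set Implicit Arguments.
Unset Strict Implicit.
Unset Printing Implicit Defensive.

Local Open Scope classical_set_scope.
Local Open Scope ring_scope.

Section NestDefs.
Variables (R : realType) (X : completeNormedModType R[i]).

Definition is_subspace (E : set X) : Prop :=
  E 0 /\ forall (a : R[i]) (x y : X), E x -> E y -> E (a *: x + y).

Definition closed_subspace (E : set X) : Prop := is_subspace E /\ closed E.

Definition lin_span (A : set X) : set X :=
  [set x | exists (n : nat) (a : 'I_n -> R[i]) (v : 'I_n -> X),
      (forall i, A (v i)) /\ x = \sum_(i < n) a i *: v i].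

Definition nest_meet (F : set (set X)) : set X := \bigcap_(E in F) E.
Definition nest_join (F : set (set X)) : set X :=
  closure (lin_span (\bigcup_(E in F) E)).

Definition nest (N : set (set X)) : Prop :=
  [/\ (forall E, N E -> closed_subspace E),
      (forall E F, N E -> N F -> E `<=` F \/ F `<=` E),
      N [set 0], N setT &
      (forall F, F `<=` N -> N (nest_meet F) /\ N (nest_join F))].

Definition bounded_op (T : X -> X) : Prop :=
  (forall (a : R[i]) (x y : X), T (a *: x + y) = a *: T x + T y) /\ continuous T.

Definition bounded_functional (f : X -> R[i]) : Prop :=
  (forall (a : R[i]) (x y : X), f (a *: x + y) = a * f x + f y) /\
  continuous (f : X -> (R[i] : numFieldType)).

Definition nest_alg (N : set (set X)) : set (X -> X) :=
  [set T | bounded_op T /\ forall E, N E -> forall x, E x -> E (T x)].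

Definition bimodule (N : set (set X)) (J : set (X -> X)) : Prop :=
  [/\ (forall T, J T -> bounded_op T),
      J (fun _ => 0),
      (forall (a : R[i]) S T, J S -> J T -> J (fun x => a *: S x + T x)) &
      (forall A S, nest_alg N A -> J S -> J (A \o S) /\ J (S \o A))].

Definition finite_rank (T : X -> X) : Prop :=
  bounded_op T /\
  exists (n : nat) (v : 'I_n -> X),
    forall x, exists a : 'I_n -> R[i], T x = \sum_(i < n) a i *: v i.

Definition sot_closure (S : set (X -> X)) : set (X -> X) :=
  [set T | bounded_op T /\
     forall (n : nat) (x : 'I_n -> X) (e : R[i]), 0 < e ->
       exists U, S U /\ forall i, `|T (x i) - U (x i)| < e].

Definition wot_closure (S : set (X -> X)) : set (X -> X) :=
  [set T | bounded_op T /\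
     forall (n m : nat) (x : 'I_n -> X) (f : 'I_m -> X -> R[i]) (e : R[i]),
       (forall j, bounded_functional (f j)) -> 0 < e ->
       exists U, S U /\ forall i j, `|f j (T (x i)) - f j (U (x i))| < e].

End NestDefs.

From HB Require Import structures.
From mathcomp Require Import all_boot all_order all_algebra.
From mathcomp Require Import complex.
From mathcomp Require Import all_classical all_reals all_analysis.
From mathcomp Require Import ring lra.
Import numFieldNormedType.Exports.
Import Order.TTheory GRing.Theory Num.Theory.
Set Implicit Arguments.
Unset Strict Implicit.
Unset Printing Implicit Defensive.
Local Open Scope classical_set_scope.
Local Open Scope ring_scope.
Local Open Scope complex_scope.

(* Given T in J, vectors x_1..x_n and e > 0, the vectors T x_k are written in the
   span of a family y_1..y_m adapted to the nest: a member of the nest containing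
   sum_i b_i y_i contains every y_i with b_i != 0.  For each y_i let K_i be the
   join of the members of the nest not containing y_i; some x_i close to y_i lies
   in every member not contained in K_i, and Hahn-Banach yields a bounded
   functional f_i vanishing on K_i and on the other y_j with f_i y_i = 1.  Then
   P = sum_i f_i(.) x_i is a finite rank operator of the nest algebra with
   P y_i = x_i, so P T lies in J, has finite rank, and is close to T at the x_k. *)

Section RealHahnBanach.
Variables (R : realType) (X : lmodType R[i]) (p : X -> R).
Hypothesis p_subadd : forall x y, p (x + y) <= p x + p y.
Hypothesis p_homog : forall (t : R) x, 0 < t -> p (t%:C *: x) = t * p x.

Definition real_linear (u : X -> R) : Prop :=
  forall (a : R) x y, u (a%:C *: x + y) = a * u x + u y.

(* G is the graph of a real-linear functional, defined on a subspace and bounded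
   above by p. *)
Definition dominated_graph (G : set (X * R)) : Prop :=
  [/\ (forall x r s, G (x, r) -> G (x, s) -> r = s),
      G (0, 0),
      (forall (a : R) x y r s, G (x, r) -> G (y, s) -> G (a%:C *: x + y, a * r + s)) &
      (forall x r, G (x, r) -> r <= p x)].

Lemma dominated_scale G a x r : dominated_graph G -> G (x, r) -> G (a%:C *: x, a * r).
Proof. by case=> _ G0 Glin _ Gx; have := Glin a _ _ _ _ Gx G0; rewrite !addr0. Qed.

(* The value al assigned to a new vector x0 must satisfy these two-sided bounds;
   they are compatible by subadditivity of p, and al is taken as a supremum. *)
Lemma extension_value G x0 : dominated_graph G -> exists al : R,
  forall z r, G (z, r) -> r - p (z - x0) <= al /\ al <= p (z + x0) - r.
Proof.
move=> [_ G0 Glin Gb].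
pose A := [set t | exists z r, G (z, r) /\ t = r - p (z - x0)].
have A_le z r t : G (z, r) -> A t -> t <= p (z + x0) - r.
  move=> Gzr [z' [r' [Gz'r' ->]]].
  have := Gb _ _ (Glin 1 _ _ _ _ Gzr Gz'r'); rewrite scale1r mul1r.
  have -> : z + z' = (z + x0) + (z' - x0) by rewrite addrACA subrr addr0.
  have := p_subadd (z + x0) (z' - x0); lra.
have A0 : A !=set0 by exists (0 - p (0 - x0)); exists 0, 0.
have Aub : has_ubound A by exists (p (0 + x0) - 0) => t /(A_le _ _ _ G0).
exists (sup A) => z r Gzr; split; last by apply: ge_sup => // t /(A_le _ _ _ Gzr).
by apply: sup_upper_bound => //; exists z, r.
Qed.

Definition graph_extend (G : set (X * R)) (x0 : X) (al : R) : set (X * R) :=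
  [set q | exists z r t, G (z, r) /\ q = (z + t%:C *: x0, r + t * al)].

Section Extend.
Variables (G : set (X * R)) (x0 : X) (al : R).
Hypotheses (domG : dominated_graph G) (x0_notin : forall r, ~ G (x0, r)).
Hypothesis al_bound :
  forall z r, G (z, r) -> r - p (z - x0) <= al /\ al <= p (z + x0) - r.

(* Since x0 is outside the domain of G, the extension is still a function. *)
Lemma graph_extend_functional x r s :
  graph_extend G x0 al (x, r) -> graph_extend G x0 al (x, s) -> r = s.
Proof.
have [Gf _ Glin _] := domG.
move=> [z1 [r1 [t1 [G1 [-> ->]]]]] [z2 [r2 [t2 [G2 []]]]].
have [<-|t12] := eqVneq t1 t2.
  by move=> /addIr Ez ->; rewrite Ez in G1; rewrite (Gf _ _ _ G1 G2).
move=> E _; exfalso.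
have E2 : (t1 - t2)%:C *: x0 = z2 - z1.
  by rewrite rmorphB scalerBl -[t1%:C *: x0](addKr z1) E addrA addrK addrC.
have := dominated_scale ((t1 - t2)^-1) domG (Glin (-1) _ _ _ _ G1 G2).
rewrite rmorphN scaleN1r [- z1 + z2]addrC -E2 scalerA -rmorphM.
by rewrite mulVf ?subr_eq0 // scale1r; apply: x0_notin.
Qed.

(* Domination by p on z + t x0 follows from the bounds on al, rescaled by |t|. *)
Lemma graph_extend_bounded x r : graph_extend G x0 al (x, r) -> r <= p x.
Proof.
have [_ _ _ Gb] := domG.
move=> [z [r' [t [Gz [-> ->]]]]].
have [t0|t0|->] := ltgtP t 0; last by rewrite mul0r scale0r !addr0; exact: Gb.
- pose s := - t; have s0 : 0 < s by rewrite oppr_gt0.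
  have [+ _] := al_bound (dominated_scale s^-1 domG Gz).
  have -> : s^-1%:C *: z - x0 = s^-1%:C *: (z + t%:C *: x0).
    have st : s^-1 * t = -1 by rewrite /s invrN mulNr mulVf ?ltr0_neq0.
    by rewrite scalerDr scalerA -rmorphM st rmorphN scaleN1r.
  rewrite p_homog ?invr_gt0 // => /(ler_wpM2l (ltW s0)).
  by rewrite mulrBr !mulrA mulfV ?gt_eqF // !mul1r /s mulNr; lra.
- have [_] := al_bound (dominated_scale t^-1 domG Gz).
  have -> : t^-1%:C *: z + x0 = t^-1%:C *: (z + t%:C *: x0).
    by rewrite scalerDr scalerA -rmorphM mulVf ?gt_eqF // scale1r.
  rewrite p_homog ?invr_gt0 // => /(ler_wpM2l (ltW t0)).
  by rewrite mulrBr !mulrA mulfV ?gt_eqF // !mul1r; lra.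
Qed.

Lemma graph_extend_dominated : dominated_graph (graph_extend G x0 al).
Proof.
have [_ G0 Glin _] := domG.
split; [exact: graph_extend_functional| |  |exact: graph_extend_bounded].
  by exists 0, 0, 0; rewrite scale0r mul0r !addr0.
move=> a x y r s [z1 [r1 [t1 [G1 [-> ->]]]]] [z2 [r2 [t2 [G2 [-> ->]]]]].
exists (a%:C *: z1 + z2), (a * r1 + r2), (a * t1 + t2); split; first exact: Glin.
congr (_, _); last by ring.
by rewrite scalerDr scalerA -rmorphM rmorphD scalerDl addrACA.
Qed.

Lemma graph_extend_proper : G `<` graph_extend G x0 al.
Proof.
split.
  by move=> [z r] Gzr; exists z, r, 0; rewrite mul0r scale0r !addr0.
move=> /(_ (x0, al)) H.
have : graph_extend G x0 al (x0, al).
  by have [_ G0 _ _] := domG; exists 0, 0, 1; rewrite scale1r mul1r !add0r.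
by move=> /H /x0_notin.
Qed.

End Extend.

Lemma dominated_graph_extend G x0 : dominated_graph G -> (forall r, ~ G (x0, r)) ->
  exists G', dominated_graph G' /\ G `<` G'.
Proof.
move=> domG x0_notin; have [al al_bound] := extension_value x0 domG.
exists (graph_extend G x0 al).
by split; [exact: graph_extend_dominated | exact: graph_extend_proper].
Qed.

(* The union of a chain of dominated graphs is dominated (the hypotheses allow
   empty members, which occur in the application of Zorn's lemma). *)
Lemma chain_union_dominated (F : set (set (X * R))) B0 :
  (forall B, F B -> B !=set0 -> dominated_graph B) -> total_on F subset -> F B0 ->
  B0 (0, 0) -> dominated_graph (\bigcup_(B in F) B).
Proof.
move=> Fdom Ftot FB0 B00.
have common B1 B2 : F B1 -> F B2 -> exists2 B, F B & B1 `<=` B /\ B2 `<=` B.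
  move=> F1 F2; case: (Ftot _ _ F1 F2) => sB.
    by exists B2 => //; split => // ? /sB.
  by exists B1 => //; split => // ? /sB.
split.
- move=> x r s [B1 F1 B1r] [B2 F2 B2s]; have [B FB [s1 s2]] := common _ _ F1 F2.
  have [Bf _ _ _] := Fdom _ FB (ex_intro _ _ (s1 _ B1r)).
  by apply: (Bf x); [apply: s1 | apply: s2].
- by exists B0.
- move=> a x y r s [B1 F1 B1r] [B2 F2 B2s]; have [B FB [s1 s2]] := common _ _ F1 F2.
  have [_ _ Bl _] := Fdom _ FB (ex_intro _ _ (s1 _ B1r)).
  by exists B => //; apply: Bl; [apply: s1 | apply: s2].
- move=> x r [B FB Br]; have [_ _ _ Bb] := Fdom _ FB (ex_intro _ _ Br).
  exact: Bb.
Qed.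

(* A maximal dominated graph extending G0 (Zorn) is defined everywhere. *)
Theorem hahn_banach_real G0 : dominated_graph G0 -> exists u : X -> R,
  [/\ real_linear u, (forall x, u x <= p x) & (forall x r, G0 (x, r) -> u x = r)].
Proof.
move=> domG0; have [_ G00 _ _] := domG0.
pose P G := G = set0 \/ (dominated_graph G /\ G0 `<=` G).
have [A [PA Amax]] : exists A, P A /\ forall B, A `<` B -> ~ P B.
  apply: Zorn_bigcup => F FP Ftot.
  have [[B0 FB0 [q B0q]]|Fempty] := pselect (exists2 B, F B & B !=set0); last first.
    left; apply/seteqP; split => // q [B FB Bq].
    by apply: Fempty; exists B => //; exists q.
  have FG0 B : F B -> B !=set0 -> dominated_graph B /\ G0 `<=` B.
    by move=> FB [q' Bq']; case: (FP B FB) => // Bempty; rewrite Bempty in Bq'.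
  have [_ G0B0] := FG0 _ FB0 (ex_intro _ _ B0q).
  right; split; last by move=> q0 /G0B0 ?; exists B0.
  apply: (chain_union_dominated _ Ftot FB0) => [B FB /(FG0 B FB) []//|].
  exact: G0B0 _ G00.
have [domA G0A] : dominated_graph A /\ G0 `<=` A.
  case: PA => // A0; exfalso; apply: (Amax G0); last by right; split.
  by rewrite A0; split => // /(_ _ G00).
have A_total x : exists r, A (x, r).
  apply: contrapT => nx; have [G' [domG' AG']] := dominated_graph_extend domA
    (fun r Ar => nx (ex_intro _ r Ar)).
  by apply: (Amax G' AG'); right; split => //; apply: subset_trans (properW AG').
have [u Au] := choice A_total; have [Af _ Al Ab] := domA.
exists u; split.
- by move=> a x y; apply: (Af (a%:C *: x + y)); [exact: Au | exact: Al].
- by move=> x; apply: Ab.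
- by move=> x r /G0A Ar; apply: (Af x).
Qed.

Section RealLinear.
Variables (u : X -> R) (u_lin : real_linear u).

Lemma real_linear0 : u 0 = 0.
Proof.
have := u_lin 1 0 0; rewrite scaler0 addr0 mul1r => /eqP.
by rewrite addrC -subr_eq subrr => /eqP.
Qed.

Lemma real_linearD x y : u (x + y) = u x + u y.
Proof. by have := u_lin 1 x y; rewrite scale1r mul1r. Qed.

Lemma real_linearZ (t : R) x : u (t%:C *: x) = t * u x.
Proof. by have := u_lin t x 0; rewrite !addr0 real_linear0 addr0. Qed.

Lemma real_linearN x : u (- x) = - u x.
Proof. by have := real_linearZ (-1) x; rewrite rmorphN scaleN1r mulN1r. Qed.

End RealLinear.

End RealHahnBanach.

Section Separation.
Variables (R : realType) (X : completeNormedModType R[i]).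

Lemma normc_real (r : R) : `|r%:C| = `|r|%:C.
Proof. by rewrite normc_def /= expr0n /= addr0 sqrtr_sqr. Qed.

Lemma normc_i : `|'i : R[i]| = 1.
Proof. by rewrite normc_def /= expr0n expr1n add0r sqrtr1. Qed.

(* The norm of X, which takes real values in R[i], read as an element of R. *)
Definition rnorm (x : X) : R := complex.Re `|x|.

Lemma rnormE x : `|x| = (rnorm x)%:C.
Proof. by rewrite /rnorm RRe_real // normr_real. Qed.

Lemma rnorm_ge0 x : 0 <= rnorm x.
Proof. by rewrite -ler0c -rnormE. Qed.

Lemma rnormD x y : rnorm (x + y) <= rnorm x + rnorm y.
Proof. by rewrite -lecR rmorphD /= -!rnormE; exact: ler_normD. Qed.

Lemma rnormZ (a : R[i]) x : rnorm (a *: x) = complex.Re `|a| * rnorm x.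
Proof.
apply: complexI; rewrite -rnormE normrZ rnormE rmorphM /=.
by rewrite RRe_real ?normr_real.
Qed.

Lemma dist_to_closed (C : set X) (y : X) : closed C -> ~ C y ->
  exists2 d : R, 0 < d & forall z, C z -> d <= rnorm (y - z).
Proof.
move=> Ccl nCy; have : ~ closure C y by move=> /Ccl.
move=> /existsNP [B] /not_implyP [/nbhs_ballP [e e0 eB] nCB].
have e_real : e = (complex.Re e)%:C by rewrite RRe_real ?gtr0_real.
exists (complex.Re e); first by rewrite -ltcR -e_real.
move=> z Cz; rewrite -lecR -rnormE -e_real.
rewrite (real_leNgt (gtr0_real e0) (normr_real _)); apply/negP => yz.
by apply: nCB; exists z; split => //; apply: eB; rewrite -ball_normE.
Qed.

Lemma subspace_scale (D : set X) a z : is_subspace D -> D z -> D (a *: z).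
Proof. by case=> D0 Dl Dz; have := Dl a _ _ Dz D0; rewrite addr0. Qed.

Lemma subspace_add (D : set X) z w : is_subspace D -> D z -> D w -> D (z + w).
Proof. by case=> D0 Dl Dz Dw; have := Dl 1 _ _ Dz Dw; rewrite scale1r. Qed.

Lemma subspace_opp (D : set X) z : is_subspace D -> D z -> D (- z).
Proof. by move=> sD /(subspace_scale (-1) sD); rewrite scaleN1r. Qed.

Lemma subspace_sum (D : set X) n (F : 'I_n -> X) : is_subspace D ->
  (forall i, D (F i)) -> D (\sum_i F i).
Proof.
move=> sD DF; apply: (big_ind D); [by case: sD | | by []].
by move=> x y; apply: subspace_add.
Qed.

Lemma continuous_of_bound (f : X -> R[i]) (k : R[i]) :
  (forall x y, f (x - y) = f x - f y) -> (forall x, `|f x| <= k * `|x|) ->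
  0 < k -> continuous (f : X -> (R[i] : numFieldType)).
Proof.
move=> fB fb k0 x; apply/cvgrPdist_lt => e e0.
have : (fun z : X => z) @ x --> x by [].
move=> /cvgrPdist_lt /(_ (e / k)); rewrite divr_gt0 // => /(_ isT).
apply: filterS => z /= H.
rewrite -fB; apply: (le_lt_trans (fb _)).
by rewrite -ltr_pdivlMl // mulrC.
Qed.

(* A real-linear functional u is the real part of the complex-linear functional
   x |-> u x - i u (i x). *)
Definition complexification (u : X -> R) (x : X) : R[i] :=
  (u x)%:C - 'i * (u ('i *: x))%:C.

Lemma complexification_linear u : real_linear u -> forall (a : R[i]) x y,
  complexification u (a *: x + y) = a * complexification u x + complexification u y.
Proof.
move=> u_lin a x w; rewrite /complexification.
have -> : a *: x + w =
    (complex.Re a)%:C *: x + ((complex.Im a)%:C *: ('i *: x) + w).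
  by rewrite scalerA addrA -scalerDl [_ * 'i]mulrC -complexE.
have -> : 'i *: ((complex.Re a)%:C *: x + ((complex.Im a)%:C *: ('i *: x) + w)) =
    (complex.Re a)%:C *: ('i *: x) + ((complex.Im a)%:C *: (- x) + 'i *: w).
  rewrite !scalerDr; congr (_ + (_ + _)); first by rewrite !scalerA mulrC.
  by rewrite scalerN -scaleNr !scalerA mulrAC -expr2 sqr_i mulN1r.
rewrite !(real_linearD u_lin) !(real_linearZ u_lin) (real_linearN u_lin).
apply/eqP; rewrite eq_complex; case: a => a1 a2 /=; simpc.
by apply/andP; split; apply/eqP; ring.
Qed.

Lemma complexification_bounded u (k : R) : real_linear u ->
  (forall x, u x <= k * rnorm x) -> 0 < k -> bounded_functional (complexification u).
Proof.
move=> u_lin ub k0.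
have u_norm x : `|u x| <= k * rnorm x.
  rewrite ler_norml ub andbT lerNl -(real_linearN u_lin); apply: le_trans (ub _) _.
  by rewrite /rnorm normrN.
split; first exact: complexification_linear.
apply: (@continuous_of_bound _ ((2 * k)%:C)); last by rewrite ltcR mulr_gt0.
  move=> x w; rewrite /complexification scalerBr -!addrA.
  rewrite !(real_linearD u_lin) !(real_linearN u_lin) !rmorphD !rmorphN /=; ring.
move=> x; rewrite /complexification; apply: le_trans (ler_normB _ _) _.
rewrite normrM normc_i mul1r !normc_real rnormE -rmorphD -rmorphM lecR -mulrA.
have rnorm_i : rnorm ('i *: x) = rnorm x by rewrite rnormZ normc_i mul1r.
have := u_norm ('i *: x); rewrite rnorm_i; have := u_norm x; lra.
Qed.

Lemma coef_bound (C : set X) (y : X) (d : R) z (a : R[i]) :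
  is_subspace C -> 0 < d -> (forall w, C w -> d <= rnorm (y - w)) -> C z ->
  d * complex.Re a <= rnorm (z + a *: y).
Proof.
move=> sC d0 dist Cz; have [->|a0] := eqVneq a 0; first by rewrite mulr0 rnorm_ge0.
have dist_a : d <= rnorm (a^-1 *: z + y).
  by have := dist _ (subspace_opp sC (subspace_scale a^-1 sC Cz)); rewrite opprK addrC.
have -> : z + a *: y = a *: (a^-1 *: z + y).
  by rewrite scalerDr scalerA mulfV // scale1r.
have Re_le : complex.Re a <= complex.Re `|a|.
  rewrite -lecR RRe_real ?normr_real //; apply: le_trans (normc_ge_Re a).
  by rewrite lecR; exact: ler_norm.
rewrite rnormZ mulrC; apply: le_trans (ler_wpM2r (ltW d0) Re_le) _.
by apply: ler_wpM2l => //; rewrite -lecR RRe_real ?normr_real ?normr_ge0.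
Qed.

Definition coef_graph (C : set X) (y : X) : set (X * R) :=
  [set q | exists z a, C z /\ q = (z + a *: y, complex.Re a)].

Lemma coef_graph_dominated (C : set X) (y : X) (d : R) : is_subspace C -> ~ C y ->
  0 < d -> (forall w, C w -> d <= rnorm (y - w)) ->
  dominated_graph (fun x => d^-1 * rnorm x) (coef_graph C y).
Proof.
move=> sC nCy d0 dist; have [C0 Clin] := sC.
have coef_uniq z1 a1 z2 a2 : C z1 -> C z2 -> z1 + a1 *: y = z2 + a2 *: y -> a1 = a2.
  move=> C1 C2 E; apply: contrapT => ne; apply: nCy.
  have E2 : (a1 - a2) *: y = z2 - z1.
    by rewrite scalerBl -[a1 *: y](addKr z1) E addrA addrK addrC.
  have Cd : C (z2 - z1) by apply: subspace_add => //; apply: subspace_opp.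
  have := subspace_scale (a1 - a2)^-1 sC Cd; rewrite -E2 scalerA mulVf ?scale1r //.
  by rewrite subr_eq0; apply/eqP.
split.
- move=> x r s [z1 [a1 [C1 [-> ->]]]] [z2 [a2 [C2 [E ->]]]].
  by rewrite (coef_uniq _ _ _ _ C1 C2 E).
- by exists 0, 0; rewrite scale0r addr0.
- move=> t x x' r s [z1 [a1 [C1 [-> ->]]]] [z2 [a2 [C2 [-> ->]]]].
  exists (t%:C *: z1 + z2), (t%:C * a1 + a2); split; first exact: Clin.
  congr (_, _); last by case: a1 a2 => ? ? [? ?] /=; ring.
  by rewrite scalerDr scalerA scalerDl addrACA.
- move=> x r [z [a [Cz [-> ->]]]].
  by rewrite ler_pdivlMl //; exact: coef_bound sC d0 dist Cz.
Qed.

Theorem separation (C : set X) (y : X) : is_subspace C -> closed C -> ~ C y ->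
  exists f : X -> R[i], [/\ bounded_functional f, (forall z, C z -> f z = 0) & f y = 1].
Proof.
move=> sC Ccl nCy; have [C0 _] := sC; have [d d0 dist] := dist_to_closed Ccl nCy.
pose p x := d^-1 * rnorm x.
have p_subadd x z : p (x + z) <= p x + p z.
  by rewrite -mulrDr; apply: ler_wpM2l; [rewrite invr_ge0 ltW | exact: rnormD].
have p_homog (t : R) x : 0 < t -> p (t%:C *: x) = t * p x.
  by move=> t0; rewrite /p rnormZ normc_real /= gtr0_norm // mulrCA.
have [u [u_lin ub u_graph]] := hahn_banach_real p_subadd p_homog
  (coef_graph_dominated sC nCy d0 dist).
have u_C z : C z -> u z = 0.
  by move=> Cz; rewrite (u_graph z (complex.Re 0)) //; exists z, 0; rewrite scale0r addr0.
exists (complexification u); split.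
- by apply: (complexification_bounded u_lin ub); rewrite invr_gt0.
- move=> z Cz; have Ciz : C ('i *: z) := subspace_scale 'i sC Cz.
  by rewrite /complexification (u_C _ Cz) (u_C _ Ciz) rmorph0 mulr0 subr0.
- rewrite /complexification (u_graph y (complex.Re 1)); last first.
    by exists 0, 1; rewrite scale1r add0r.
  rewrite (u_graph ('i *: y) (complex.Re 'i)); last by exists 0, 'i; rewrite add0r.
  by rewrite /= mulr0 subr0.
Qed.

End Separation.

Definition ord_cons {T : Type} (v : T) n (y : 'I_n -> T) (i : 'I_n.+1) : T :=
  if unlift ord0 i is Some j then y j else v.

Lemma ord_cons0 T (v : T) n (y : 'I_n -> T) : ord_cons v y ord0 = v.
Proof. by rewrite /ord_cons unlift_none. Qed.

Lemma ord_consS T (v : T) n (y : 'I_n -> T) j : ord_cons v y (lift ord0 j) = y j.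
Proof. by rewrite /ord_cons liftK. Qed.

(* A closed subspace plus a finite-dimensional one is closed, so a vector outside
   it can be separated by a functional. *)
Section FiniteExtension.
Variables (R : realType) (X : completeNormedModType R[i]).

Lemma sum_ord_cons n (b : 'I_n.+1 -> R[i]) (v : X) (y : 'I_n -> X) :
  \sum_i b i *: ord_cons v y i = b ord0 *: v + \sum_j b (lift ord0 j) *: y j.
Proof.
rewrite big_ord_recl ord_cons0; congr (_ + _).
by apply: eq_bigr => j _; rewrite ord_consS.
Qed.

Definition add_line (D : set X) (v : X) : set X :=
  [set x | exists d a, D d /\ x = d + a *: v].

Lemma add_line_subspace D v : is_subspace D -> is_subspace (add_line D v).
Proof.
move=> sD; split; first by exists 0, 0; rewrite scale0r addr0; split => //; case: sD.
move=> a x y [d1 [a1 [D1 ->]]] [d2 [a2 [D2 ->]]].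
exists (a *: d1 + d2), (a * a1 + a2); split; first by case: sD => _; apply.
by rewrite scalerDr scalerA scalerDl addrACA.
Qed.

(* D + C v is closed when D is a closed subspace: if v is not in D, it is the
   preimage of D under x |-> x - f x v for a functional f separating v from D. *)
Lemma add_line_closed D v : is_subspace D -> closed D -> closed (add_line D v).
Proof.
move=> sD cD; have [Dv|Dnv] := pselect (D v).
  suff -> : add_line D v = D by [].
  apply/seteqP; split => x.
    by case=> d [a [Dd ->]]; apply: subspace_add => //; apply: subspace_scale.
  by move=> Dx; exists x, 0; rewrite scale0r addr0.
have [f [[f_lin f_cont] fD fv]] := separation sD cD Dnv.
suff -> : add_line D v = (fun x => x - f x *: v) @^-1` D.
  apply: preimage_closed => // x _; apply: cvgB; first exact: cvg_id.
  by apply: continuousZr_tmp; apply: f_cont.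
apply/seteqP; split => x /=.
  case=> d [a [Dd ->]].
  have -> : f (d + a *: v) = a by rewrite addrC f_lin (fD _ Dd) fv mulr1 addr0.
  by rewrite addrK.
by move=> Dx; exists (x - f x *: v), (f x); rewrite subrK.
Qed.

Definition span_over (K : set X) n (w : 'I_n -> X) : set X :=
  [set x | exists k (a : 'I_n -> R[i]), K k /\ x = k + \sum_i a i *: w i].

Lemma span_over0 K (w : 'I_0 -> X) : span_over K w = K.
Proof.
apply/seteqP; split => x; first by case=> k [a [Kk ->]]; rewrite big_ord0 addr0.
by move=> Kx; exists x, (fun _ => 0); rewrite big_ord0 addr0.
Qed.

Lemma span_overS K n (w : 'I_n.+1 -> X) :
  span_over K w = add_line (span_over K (fun i => w (lift ord0 i))) (w ord0).
Proof.
apply/seteqP; split => x.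
  case=> k [a [Kk ->]]; rewrite big_ord_recl.
  exists (k + \sum_(i < n) a (lift ord0 i) *: w (lift ord0 i)), (a ord0); split.
    by exists k, (fun i => a (lift ord0 i)).
  by rewrite addrAC addrA.
case=> d [a0 [[k [a [Kk ->]]] ->]].
exists k, (ord_cons a0 a); split => //.
rewrite big_ord_recl ord_cons0 addrAC addrA; congr (_ + _ + _).
by apply: eq_bigr => i _; rewrite ord_consS.
Qed.

Lemma span_over_closed K n (w : 'I_n -> X) : is_subspace K -> closed K ->
  is_subspace (span_over K w) /\ closed (span_over K w).
Proof.
elim: n w => [|n IH] w sK cK; first by rewrite span_over0.
rewrite span_overS; have [s c] := IH (fun i => w (lift ord0 i)) sK cK.
by split; [apply: add_line_subspace | apply: add_line_closed].
Qed.

Lemma separation_span K n (w : 'I_n -> X) y : is_subspace K -> closed K ->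
  ~ span_over K w y -> exists f : X -> R[i], [/\ bounded_functional f,
     (forall z, K z -> f z = 0), (forall i, f (w i) = 0) & f y = 1].
Proof.
move=> sK cK nKy; have [s c] := span_over_closed w sK cK.
have [f [bf fK fy]] := separation s c nKy.
exists f; split => // [z Kz|i]; apply: fK.
  by exists z, (fun _ => 0); rewrite big1 ?addr0 // => i; rewrite scale0r.
exists 0, (fun j => if j == i then 1 else 0); split; first by case: sK.
rewrite add0r (bigD1 i) //= eqxx scale1r big1 ?addr0 // => j /negbTE ->.
by rewrite scale0r.
Qed.

End FiniteExtension.

Section NestApproximation.
Variables (R : realType) (X : completeNormedModType R[i]) (N : set (set X)).
Hypothesis nN : nest N.

Lemma nest_subspace G : N G -> is_subspace G.
Proof. by case: nN => H _ _ _ _ /H []. Qed.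

Lemma nest_closed G : N G -> closed G.
Proof. by case: nN => H _ _ _ _ /H []. Qed.

Lemma nest_chain G H : N G -> N H -> G `<=` H \/ H `<=` G.
Proof. by case: nN => _ Hc _ _ _; apply: Hc. Qed.

Lemma common_member n (v : 'I_n -> X) (P : set (set X)) G0 :
  P `<=` N -> P G0 -> (forall i, exists G, P G /\ G (v i)) ->
  exists G, P G /\ forall i, G (v i).
Proof.
move=> PN PG0; elim: n v => [|n IH] v Hv; first by exists G0; split => // [[]].
have [G [PG Gv]] := IH (fun i => v (lift ord0 i)) (fun i => Hv _).
have [H [PH Hv0]] := Hv ord0.
case: (nest_chain (PN _ PG) (PN _ PH)) => GH.
  by exists H; split => // i; case: (unliftP ord0 i) => [j ->|->] //; apply: GH.
by exists G; split => // i; case: (unliftP ord0 i) => [j ->|->] //; apply: GH.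
Qed.

(* Let K be the join of the members of the nest not containing y (its "immediate
   predecessor"). Either y is not in K, or y is approximated by vectors lying in
   members not containing y; in both cases we get K and x close to y such that
   every member of the nest contains x or is contained in K. *)
Lemma approx_in_nest (y : X) (d : R[i]) : 0 < d -> y != 0 ->
  exists K x, [/\ N K, ~ K y, `|y - x| < d & forall G, N G -> G x \/ G `<=` K].
Proof.
move=> d0 y0.
pose U := [set G | N G /\ ~ G y].
have UN : U `<=` N by move=> G [].
have [Ly|nLy] := pselect (nest_join U y); last first.
  have NL : N (nest_join U) by case: nN => _ _ _ _ /(_ U UN) [].
  exists (nest_join U), y; split => //; first by rewrite subrr normr0.
  move=> G NG; have [Gy|nGy] := pselect (G y); [left | right] => // z Gz.
  apply: subset_closure; exists 1%N, (fun _ => 1), (fun _ => z); split.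
    by move=> _; exists G.
  by rewrite big_ord1 scale1r.
have [u [[n [a [v [Uv ->]]]] Bu]] := Ly (ball y d) (nbhsx_ballx _ _ d0).
have U0 : U [set 0].
  by split; [case: nN | move=> /= y0'; rewrite y0' eqxx in y0].
have [G [UG Gv]] := common_member UN U0 (fun i => let: ex_intro2 G UG Gv := Uv i in
  ex_intro _ G (conj UG Gv)).
have sG := nest_subspace (UN _ UG).
exists G, (\sum_i a i *: v i); split.
- exact: UN.
- by case: UG.
- by move: Bu; rewrite -ball_normE.
- move=> H NH; case: (nest_chain (UN _ UG) NH) => GH; [left | right] => //.
  by apply: GH; apply: subspace_sum => // i; apply: subspace_scale.
Qed.

Lemma line_identity (z Y S1 S2 : X) (c1 c2 c t : R[i]) : t * (c1 - c2) = c - c1 ->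
  z + c *: Y + (S1 + t *: (S1 - S2)) =
  (z + c1 *: Y + S1) + t *: ((z + c1 *: Y + S1) - (z + c2 *: Y + S2)).
Proof.
move=> tc.
have -> : z + c1 *: Y + S1 - (z + c2 *: Y + S2) = (c1 - c2) *: Y + (S1 - S2).
  by rewrite scalerBl opprD opprD [LHS]addrACA [X in X + _ = _]addrACA subrr add0r.
rewrite [X in _ = _ + X]scalerDr scalerA tc scalerBl.
set T := t *: (S1 - S2).
rewrite [RHS]addrA !addrA; congr (_ + T).
by rewrite [RHS]addrAC [z + c1 *: Y + S1]addrAC addrK addrAC.
Qed.

(* Among the translates z + sum_i a_i y_i there is one lying in every member of the
   nest that contains some translate: the translates cannot "climb" along a line. *)
Lemma minimal_level m (y : 'I_m -> X) z : exists a : 'I_m -> R[i],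
  forall a' K, N K -> K (z + \sum_i a' i *: y i) -> K (z + \sum_i a i *: y i).
Proof.
elim: m y z => [|m IH] y z.
  by exists (fun _ => 0) => a' K _; rewrite !big_ord0.
pose y' j := y (lift ord0 j).
have [A HA] := choice (fun c => IH y' (z + c *: y ord0)).
pose vc c := z + c *: y ord0 + \sum_j A c j *: y' j.
have line K c1 c2 c : N K -> c1 != c2 -> K (vc c1) -> K (vc c2) -> K (vc c).
  move=> NK c12 K1 K2; have sK := nest_subspace NK.
  pose t := (c - c1) / (c1 - c2).
  have tc : t * (c1 - c2) = c - c1 by rewrite /t divfK // subr_eq0.
  apply: (HA c (fun j => A c1 j + t * (A c1 j - A c2 j))) => //.
  rewrite [X in K X](_ : _ = vc c1 + t *: (vc c1 - vc c2)); last first.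
    rewrite /vc -(line_identity _ _ _ _ tc); congr (_ + _).
    rewrite -sumrB scaler_sumr -big_split /=; apply: eq_bigr => i _.
    by rewrite scalerDl scalerBr !scalerA mulrBr scalerBl.
  apply: subspace_add => //; apply: subspace_scale => //.
  by apply: subspace_add => //; apply: subspace_opp.
have [cs Hcs] : exists cs, forall c K, N K -> K (vc c) -> K (vc cs).
  apply: contrapT => nH.
  have escape cs : exists c K, [/\ N K, K (vc c) & ~ K (vc cs)].
    apply: contrapT => nc; apply: nH; exists cs => c K NK Kc.
    by apply: contrapT => nK; apply: nc; exists c, K.
  have [c1 [K1 [NK1 K1c1 nK10]]] := escape 0.
  have [c2 [K2 [NK2 K2c2 nK21]]] := escape c1.
  have c21 : c2 != c1 by apply/eqP => e; rewrite e in K2c2.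
  case: (nest_chain NK1 NK2) => K12; first by apply: nK21; apply: K12.
  by apply: nK10; apply: (line K1 c2 c1 0) => //; apply: K12.
exists (ord_cons cs (A cs)) => a' K NK.
rewrite big_ord_recl addrA => /(HA (a' ord0) _ K NK) /(Hcs _ _ NK).
rewrite big_ord_recl ord_cons0 addrA /vc.
by congr (K (_ + _)); apply: eq_bigr => j _; rewrite ord_consS.
Qed.

Definition adapted m (y : 'I_m -> X) : Prop := (forall i, y i != 0) /\
  forall K (b : 'I_m -> R[i]), N K -> K (\sum_i b i *: y i) ->
    forall i, b i != 0 -> K (y i).

Lemma adapted_cons m (y : 'I_m -> X) (a : 'I_m -> R[i]) z :
  adapted y ->
  (forall a' K, N K -> K (z + \sum_i a' i *: y i) -> K (z + \sum_i a i *: y i)) ->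
  z + \sum_i a i *: y i != 0 -> adapted (ord_cons (z + \sum_i a i *: y i) y).
Proof.
set v := z + _ => -[y0 ady] amin v0; split.
  by move=> i; case: (unliftP ord0 i) => [j ->|->]; rewrite ?ord_consS ?ord_cons0.
move=> K b NK; rewrite sum_ord_cons => Kb i bi; have sK := nest_subspace NK.
have Kv : b ord0 != 0 -> K v.
  move=> b0; apply: (amin (fun j => a j + (b ord0)^-1 * b (lift ord0 j)) K NK).
  rewrite [X in K X](_ : _ =
      (b ord0)^-1 *: (b ord0 *: v + \sum_j b (lift ord0 j) *: y j)); last first.
    rewrite scalerDr scalerA mulVf // scale1r scaler_sumr /v -addrA; congr (_ + _).
    by rewrite -big_split; apply: eq_bigr => j _; rewrite scalerDl scalerA.
  exact: subspace_scale.
have Krest : K (\sum_j b (lift ord0 j) *: y j).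
  have [b00|b0] := eqVneq (b ord0) 0; first by move: Kb; rewrite b00 scale0r add0r.
  rewrite -[X in K X](addKr (b ord0 *: v)); apply: subspace_add => //.
  by apply: subspace_opp => //; apply: subspace_scale => //; exact: Kv.
case: (unliftP ord0 i) bi => [j ->|->] bi; last by rewrite ord_cons0; apply: Kv.
by rewrite ord_consS; apply: (ady K _ NK Krest).
Qed.

Lemma adapted_basis n (z : 'I_n -> X) : exists m (y : 'I_m -> X),
  adapted y /\ forall k, exists c : 'I_m -> R[i], z k = \sum_i c i *: y i.
Proof.
elim: n z => [|n IH] z.
  by exists 0%N, (fun _ => 0); split; [split => [[]//|K b _ _ []] | case].
have [m [y [ay Hy]]] := IH (fun k => z (lift ord0 k)).
have [[a za]|z0_notin] :=
  pselect (exists a : 'I_m -> R[i], z ord0 = \sum_i a i *: y i).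
  exists m, y; split => // k.
  by case: (unliftP ord0 k) => [j ->|->]; [exact: Hy | exists a].
have [a amin] := minimal_level y (z ord0).
set v := z ord0 + _ in amin.
have zv : z ord0 = v + \sum_i (- a i) *: y i.
  by rewrite /v -addrA -big_split big1 ?addr0 //= => i _; rewrite -scalerDl subrr scale0r.
have v0 : v != 0.
  by apply/eqP => e; apply: z0_notin; exists (fun i => - a i); rewrite zv e add0r.
exists m.+1, (ord_cons v y); split; first exact: adapted_cons.
move=> k; case: (unliftP ord0 k) => [j ->|->].
  have [c ->] := Hy j; exists (ord_cons 0 c).
  rewrite sum_ord_cons ord_cons0 scale0r add0r.
  by apply: eq_bigr => i _; rewrite ord_consS.
exists (ord_cons 1 (fun i => - a i)); rewrite sum_ord_cons ord_cons0 scale1r zv.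
by congr (_ + _); apply: eq_bigr => i _; rewrite ord_consS.
Qed.

Definition omit_at m (y : 'I_m -> X) (i : 'I_m) (j : 'I_m) : X :=
  if j == i then 0 else y j.

Lemma adapted_not_in_span m (y : 'I_m -> X) i K : adapted y -> N K -> ~ K (y i) ->
  ~ span_over K (omit_at y i) (y i).
Proof.
move=> [_ ady] NK nKy [k [b [Kk E]]]; apply: nKy.
pose b' j := if j == i then 1 else - b j.
apply: (ady K b' NK _ i); last by rewrite /b' eqxx oner_neq0.
suff -> : \sum_j b' j *: y j = k by [].
rewrite (bigD1 i) //= /b' eqxx scale1r E (bigD1 i) //= /omit_at eqxx scaler0 add0r.
rewrite addrAC -addrA -big_split /= big1 ?addr0 // => j /negbTE ->.
by rewrite scaleNr addNr.
Qed.

Lemma adapted_dual m (y : 'I_m -> X) (d : R[i]) i : 0 < d -> adapted y ->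
  exists (K : set X) (x : X) (f : X -> R[i]),
  [/\ `|y i - x| < d, (forall G, N G -> G x \/ G `<=` K),
      bounded_functional f, (forall z, K z -> f z = 0) &
      (forall j, f (y j) = if j == i then 1 else 0)].
Proof.
move=> d0 ay; have [K [x [NK nKy yx Gx]]] := approx_in_nest d0 (ay.1 i).
have [f [bf fK fw fy]] := separation_span (nest_subspace NK) (nest_closed NK)
  (adapted_not_in_span ay NK nKy).
exists K, x, f; split => // j; have [->|ji] := eqVneq j i; first exact: fy.
by have := fw j; rewrite /omit_at (negbTE ji).
Qed.

Definition rank_sum m (f : 'I_m -> X -> R[i]) (x : 'I_m -> X) (z : X) : X :=
  \sum_i f i z *: x i.

Lemma rank_sum_finite_rank m (f : 'I_m -> X -> R[i]) (x : 'I_m -> X) :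
  (forall i, bounded_functional (f i)) -> finite_rank (rank_sum f x).
Proof.
move=> bf; split; last by exists m, x => z; exists (fun i => f i z).
split.
  move=> a z w; rewrite /rank_sum scaler_sumr -big_split; apply: eq_bigr => i _ /=.
  by have [f_lin _] := bf i; rewrite f_lin scalerDl scalerA.
rewrite /rank_sum; apply: continuous_big => [|i _ z]; first exact: add_continuous.
by have [_ f_cont] := bf i; apply: continuousZr_tmp; apply: f_cont.
Qed.

Lemma rank_sum_nest_alg m (f : 'I_m -> X -> R[i]) (x : 'I_m -> X) :
  (forall i, bounded_functional (f i)) ->
  (forall i G, N G -> G (x i) \/ (forall z, G z -> f i z = 0)) ->
  nest_alg N (rank_sum f x).
Proof.
move=> bf Gx; split; first by case: (rank_sum_finite_rank x bf).
move=> G NG z Gz; have sG := nest_subspace NG.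
apply: subspace_sum => // i; case: (Gx i G NG) => [Gxi|fG].
  exact: subspace_scale.
by rewrite fG // scale0r; case: sG.
Qed.

Theorem approx_adapted m (y : 'I_m -> X) (d : R[i]) : 0 < d -> adapted y ->
  exists P : X -> X, [/\ nest_alg N P, finite_rank P & forall i, `|y i - P (y i)| < d].
Proof.
move=> d0 ay.
have [K HK] := choice (fun i => adapted_dual i d0 ay).
have [x Hx] := choice HK; have [f Hf] := choice Hx.
have bf i : bounded_functional (f i) by have [] := Hf i.
exists (rank_sum f x); split.
- apply: rank_sum_nest_alg => // i G NG.
  have [_ GxK _ fK _] := Hf i.
  by case: (GxK G NG) => [|GK]; [left | right => z /GK /fK].
- exact: rank_sum_finite_rank.
- move=> i; rewrite /rank_sum (bigD1 i) //=.
  have [yx _ _ _ fy] := Hf i; rewrite fy eqxx scale1r big1 ?addr0 //.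
  by move=> j ji; have [_ _ _ _ ->] := Hf j; rewrite eq_sym (negbTE ji) scale0r.
Qed.

End NestApproximation.

Section Closures.
Variables (R : realType) (X : completeNormedModType R[i]).

Lemma linear_sum (P : X -> X) : (forall a x z, P (a *: x + z) = a *: P x + P z) ->
  forall n (c : 'I_n -> R[i]) (y : 'I_n -> X),
  P (\sum_i c i *: y i) = \sum_i c i *: P (y i).
Proof.
move=> P_lin; have P0 : P 0 = 0.
  have := P_lin 1 0 0; rewrite scaler0 addr0 scale1r.
  by move/(congr1 (fun t => t - P 0)); rewrite subrr addrK.
elim=> [|n IH] c y; first by rewrite !big_ord0.
by rewrite !big_ord_recl P_lin IH.
Qed.

Lemma finite_rank_comp (P T : X -> X) :
  finite_rank P -> bounded_op T -> finite_rank (P \o T).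
Proof.
move=> [[P_lin P_cont] [k [v Pv]]] [T_lin T_cont]; split; last first.
  by exists k, v => u; exact: Pv.
split; first by move=> a u w /=; rewrite T_lin P_lin.
by move=> u; apply: continuous_comp; [apply: T_cont | apply: P_cont].
Qed.

(* Every operator T of the bimodule is approximated at finitely many points x_k by
   P T, where P is a finite rank operator of the nest algebra moving an adapted
   family spanning the T x_k by less than e / (1 + sum of the coefficients). *)
Theorem bimodule_sot_approx (N : set (set X)) (J : set (X -> X)) :
  nest N -> bimodule N J -> J `<=` sot_closure (J `&` (@finite_rank R X)).
Proof.
move=> nN [Jb _ _ Jmul] T JT; split; first exact: Jb.
move=> n x e e0.
have [m [y [ay coef]]] := adapted_basis nN (fun k => T (x k)).
have [C TxC] := choice coef.
pose S := \sum_k \sum_i `|C k i|.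
have S0 : 0 <= S by apply: sumr_ge0 => k _; apply: sumr_ge0 => i _.
have S1 : 0 < 1 + S by rewrite ltr_pwDl.
have [P [PN Pfin Py]] := approx_adapted nN (divr_gt0 e0 S1) ay.
have [[P_lin _] _] := PN.
exists (P \o T); split.
  split; first by have [] := Jmul P T PN JT.
  exact: finite_rank_comp Pfin (Jb T JT).
move=> k /=; rewrite TxC linear_sum // -sumrB.
under eq_bigr do rewrite -scalerBr.
apply: (le_lt_trans (ler_norm_sum _ _ _)).
apply: (@le_lt_trans _ _ (\sum_i `|C k i| * (e / (1 + S)))).
  by apply: ler_sum => i _; rewrite normrZ ler_wpM2l // ltW.
rewrite -mulr_suml mulrA ltr_pdivrMr // mulrC ltr_pM2l //.
apply: (@le_lt_trans _ _ S); last by rewrite ltrDr ltr01.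
by rewrite /S (bigD1 k) //= lerDl; apply: sumr_ge0 => ? _; apply: sumr_ge0.
Qed.

(* The strong operator topology is finer than the weak one: a WOT neighbourhood
   given by points x_i and functionals f_j contains a SOT neighbourhood, by
   continuity of the f_j. *)
Theorem sot_closure_sub_wot (S : set (X -> X)) : sot_closure S `<=` wot_closure S.
Proof.
move=> T [bT HT]; split => // n m x f e bf e0.
have radius (p : 'I_n * 'I_m) : exists D : R[i], 0 < D /\ forall w,
    `|T (x p.1) - w| < D -> `|f p.2 (T (x p.1)) - f p.2 w| < e.
  have [_ fc] := bf p.2.
  move: (fc (T (x p.1))) => /cvgrPdist_lt /(_ e e0) /nbhs_ballP [D D0 DB].
  by exists D; split => // w Dw; apply: DB; rewrite -ball_normE.
have [D HD] := choice radius.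
have D_inv_ge0 p : 0 <= (D p)^-1 by rewrite invr_ge0 ltW //; case: (HD p).
pose Sm := \sum_p (D p)^-1.
have Sm0 : 0 <= Sm by apply: sumr_ge0 => p _.
have [U [SU HU]] : exists U, S U /\ forall i, `|T (x i) - U (x i)| < (1 + Sm)^-1.
  by apply: HT; rewrite invr_gt0 ltr_pwDl.
exists U; split => // i j.
have [_ HDp] := HD (i, j); apply: HDp; apply: (lt_le_trans (HU i)).
rewrite -(invrK (D (i, j))) lef_pV2 ?posrE ?invr_gt0 ?ltr_pwDl //.
rewrite /Sm (bigD1 (i, j)) //= addrCA lerDl addr_ge0 ?sumr_ge0 //.
by case: (HD (i, j)).
Qed.

End Closures.

Theorem mainTheorem9 (R : realType) (X : completeNormedModType R[i])
  (N : set (set X)) (J : set (X -> X)) :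
  nest N -> bimodule N J ->
  let J0 := J `&` (@finite_rank R X) in
  J `<=` sot_closure J0 /\ sot_closure J0 `<=` wot_closure J0.
Proof.
move=> nN bJ J0; split; first exact: bimodule_sot_approx nN bJ.
exact: sot_closure_sub_wot.
Qed.
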